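(* Let $(\mathfrak{A},\varphi,\tau)$ be a $*$-dynamical system and let $(\mathfrak{G},\pi,\Omega)$ be any cyclic representation of $(\mathfrak{A},\varphi)$. Let $\iota:\mathfrak{A}\to\mathfrak{G}$, $\iota(A)=\pi(A)\Omega$, and let $U_0:\mathfrak{G}\to\mathfrak{G}$ be the (well-defined, linear, norm at most $1$) operator $U_0\iota(A)=\iota(\tau(A))$. Let $U:\mathfrak{H}\to\mathfrak{H}$ be the bounded linear extension of $U_0$ to the completion $\mathfrak{H}$ of $\mathfrak{G}$, and let $P$ be the orthogonal projection of $\mathfrak{H}$ onto the subspace of fixed points of $U$. Then $(\mathfrak{A},\varphi,\tau)$ is ergodic if and only if $P=\Omega\otimes\Omega$, i.e. if and only if the fixed points of $U$ form a one-dimensional subspace of $\mathfrak{H}$.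
   Context: All algebras are over $\mathbb{C}$. A state on a unital $*$-algebra $\mathfrak{A}$ is a linear functional $\varphi$ with $\varphi(A^*A)\ge0$ for all $A$ and $\varphi(1)=1$. A $*$-dynamical system is a triple $(\mathfrak{A},\varphi,\tau)$ with $\mathfrak{A}$ a unital $*$-algebra, $\varphi$ a state, and $\tau:\mathfrak{A}\to\mathfrak{A}$ linear with $\tau(1)=1$ and $\varphi(\tau(A)^*\tau(A))\le\varphi(A^*A)$ for all $A$. Let $\|A\|_\varphi=\sqrt{\varphi(A^*A)}$, and identify $\alpha\in\mathbb{C}$ with $\alpha1$. The system is ergodic if for every sequence $(A_n)$ in $\mathfrak{A}$ with $\|\tau(A_n)-A_n\|_\varphi\to0$ which is Cauchy for $\|\cdot\|_\varphi$ (for every $\varepsilon>0$ there is $N$ with $\|A_m-A_n\|_\varphi\le\varepsilon$ for $m,n>N$), there is $\alpha\in\mathbb{C}$ with $\|A_n-\alpha\|_\varphi\to0$. A cyclic representation of $(\mathfrak{A},\varphi)$ is a triple $(\mathfrak{G},\pi,\Omega)$ with $\mathfrak{G}$ an inner product space, $\pi:\mathfrak{A}\to L(\mathfrak{G})$ (linear operators on $\mathfrak{G}$) linear with $\pi(1)=1$ and $\pi(AB)=\pi(A)\pi(B)$, $\Omega\in\mathfrak{G}$, $\pi(\mathfrak{A})\Omega=\mathfrak{G}$, and $\langle\pi(A)\Omega,\pi(B)\Omega\rangle=\varphi(A^*B)$ for all $A,B$. Inner products are linear in the second argument; for $x,y\in\mathfrak{H}$, $x\otimes y$ denotes the operator $z\mapsto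 x\langle y,z\rangle$. *)

(* The order on R[i] is the usual partial order of numClosedFields:
   x <= y iff y - x is a nonnegative real. *)
From HB Require Import structures.
From mathcomp Require Import all_boot all_order all_algebra.
From mathcomp Require Import reals complex.
Set Implicit Arguments. Unset Strict Implicit. Unset Printing Implicit Defensive.
Import Order.TTheory GRing.Theory Num.Theory Num.Def.
Local Open Scope ring_scope.

Section Defs.
Variable R : realType.
Local Notation C := R[i].

Definition is_star_algebra (A : algType C) (star : A -> A) : Prop :=
  [/\ forall a b : A, star (a + b) = star a + star b,
      forall (c : C) (a : A), star (c *: a) = (conjC c) *: star a,
      forall a b : A, star (a * b) = star b * star a
    & forall a : A, star (star a) = a].

Definition is_state (A : algType C) (star : A -> A) (phi : A -> C) : Prop :=
  [/\ forall (c : C) (a b : A), phi (c *: a + b) = c * phi a + phi b,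
      forall a : A, 0 <= phi (star a * a)
    & phi 1 = 1].

Definition is_star_dyn_system (A : algType C) (star : A -> A)
    (phi : A -> C) (tau : A -> A) : Prop :=
  [/\ is_star_algebra star, is_state star phi,
      forall (c : C) (a b : A), tau (c *: a + b) = c *: tau a + tau b,
      tau 1 = 1
    & forall a : A, phi (star (tau a) * tau a) <= phi (star a * a)].

Definition phinorm (A : algType C) (star : A -> A) (phi : A -> C) (a : A) : C :=
  sqrtC (phi (star a * a)).

Definition ergodic (A : algType C) (star : A -> A) (phi : A -> C)
    (tau : A -> A) : Prop :=
  forall u : nat -> A,
    (forall e : C, 0 < e -> exists N : nat, forall n : nat, (N < n)%N ->
        phinorm star phi (tau (u n) - u n) <= e) ->
    (forall e : C, 0 < e -> exists N : nat, forall m n : nat,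
        (N < m)%N -> (N < n)%N -> phinorm star phi (u m - u n) <= e) ->
    exists alpha : C, forall e : C, 0 < e -> exists N : nat,
      forall n : nat, (N < n)%N -> phinorm star phi (u n - alpha%:A) <= e.

Definition is_inner_product (G : lmodType C) (ip : G -> G -> C) : Prop :=
  [/\ forall (x y z : G) (c : C), ip x (c *: y + z) = c * ip x y + ip x z,
      forall x y : G, ip y x = conjC (ip x y),
      forall x : G, 0 <= ip x x
    & forall x : G, ip x x = 0 -> x = 0].

Definition ipnorm (G : lmodType C) (ip : G -> G -> C) (x : G) : C :=
  sqrtC (ip x x).

Definition ip_complete (H : lmodType C) (ip : H -> H -> C) : Prop :=
  forall u : nat -> H,
    (forall e : C, 0 < e -> exists N : nat, forall m n : nat,
        (N < m)%N -> (N < n)%N -> ipnorm ip (u m - u n) <= e) ->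
    exists h : H, forall e : C, 0 < e -> exists N : nat,
      forall n : nat, (N < n)%N -> ipnorm ip (u n - h) <= e.

Definition is_cyclic_rep (A : algType C) (star : A -> A) (phi : A -> C)
    (G : lmodType C) (ip : G -> G -> C) (pi : A -> G -> G) (Omega : G) : Prop :=
  is_inner_product ip /\
  (forall a : A, forall (c : C) (x y : G), pi a (c *: x + y) = c *: pi a x + pi a y) /\
  (forall (c : C) (a b : A) (x : G), pi (c *: a + b) x = c *: pi a x + pi b x) /\
  (forall x : G, pi 1 x = x) /\
  (forall (a b : A) (x : G), pi (a * b) x = pi a (pi b x)) /\
  (forall x : G, exists a : A, x = pi a Omega) /\
  (forall a b : A, ip (pi a Omega) (pi b Omega) = phi (star a * b)).

Definition is_completion (G : lmodType C) (ip : G -> G -> C)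
    (H : lmodType C) (ipH : H -> H -> C) (j : G -> H) : Prop :=
  [/\ is_inner_product ipH, ip_complete ipH,
      forall (c : C) (x y : G), j (c *: x + y) = c *: j x + j y,
      forall x y : G, ipH (j x) (j y) = ip x y
    & forall (h : H) (e : C), 0 < e -> exists x : G, ipnorm ipH (h - j x) <= e].

Definition is_bounded_linear (H : lmodType C) (ipH : H -> H -> C) (U : H -> H) : Prop :=
  (forall (c : C) (x y : H), U (c *: x + y) = c *: U x + U y) /\
  exists M : C, 0 <= M /\ forall h : H, ipnorm ipH (U h) <= M * ipnorm ipH h.

Definition is_fixed_point_projection (H : lmodType C) (ipH : H -> H -> C)
    (U : H -> H) (P : H -> H) : Prop :=
  (forall h : H, U (P h) = P h) /\
  (forall h k : H, U k = k -> ipH k (h - P h) = 0).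

End Defs.

From HB Require Import structures.
From mathcomp Require Import all_boot all_order all_algebra.
From mathcomp Require Import reals complex.
From mathcomp Require Import ring.
Import Order.TTheory GRing.Theory Num.Theory Num.Def.
Local Open Scope ring_scope.
Set Implicit Arguments.
Unset Strict Implicit.
Unset Printing Implicit Defensive.

(* The map iota : a |-> j (pi a Omega) is isometric from (A, ||.||_phi) into H
   and intertwines tau with U.  A sequence (a_n) as in the definition of
   ergodicity is thus a sequence iota a_n which is Cauchy, hence convergent in
   H, and asymptotically fixed by U; as U is bounded its limit is a fixed point
   of U.  Conversely, by density every fixed point k of U is the limit of some
   iota a_n, and then U (iota a_n) - iota a_n = (U - 1)(iota a_n - k) -> 0.
   Hence ergodicity says exactly that the fixed space of U is spanned by the
   unit vector j Omega, and this holds iff the orthogonal projection onto the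
   fixed space is h |-> <j Omega, h> j Omega. *)

Section LinearMaps.
Variables (R : realType) (V W : lmodType R[i]) (f : V -> W).
Hypothesis f_linear : linear f.

Let fL : {linear V -> W} :=
  HB.pack f (GRing.isLinear.Build _ _ _ _ f f_linear).

Lemma linD x y : f (x + y) = f x + f y. Proof. exact: raddfD fL x y. Qed.
Lemma linN x : f (- x) = - f x. Proof. exact: raddfN fL x. Qed.
Lemma linB x y : f (x - y) = f x - f y. Proof. exact: raddfB fL x y. Qed.
Lemma linZ c x : f (c *: x) = c *: f x. Proof. exact: linearZZ fL c x. Qed.

End LinearMaps.

Lemma star_algebra1 (R : realType) (A : algType R[i]) (star : A -> A) :
  is_star_algebra star -> star 1 = 1.
Proof.
by case=> _ _ starM starK; have := starM 1 (star 1); rewrite mul1r starK mul1r.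
Qed.

Section Vanishing.
Variable R : realType.
Local Notation C := R[i].

Definition vanishing (f : nat -> C) := forall e : C, 0 < e ->
  exists N : nat, forall n : nat, (N < n)%N -> f n <= e.

Definition vanishing2 (f : nat -> nat -> C) := forall e : C, 0 < e ->
  exists N : nat, forall m n : nat, (N < m)%N -> (N < n)%N -> f m n <= e.

Lemma vanishing_le f g : (forall n, f n <= g n) -> vanishing g -> vanishing f.
Proof.
by move=> fg vg e /vg[N gN]; exists N => n /gN; apply: le_trans.
Qed.

Lemma eq_vanishing f g : f =1 g -> vanishing f <-> vanishing g.
Proof. by move=> fg; split; apply: vanishing_le => n; rewrite fg. Qed.

Lemma eq_vanishing2 f g :
  (forall m n, f m n = g m n) -> vanishing2 f <-> vanishing2 g.
Proof.
move=> fg; split=> v e /v[N fN]; exists N => m n mN nN.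
  by rewrite -fg fN.
by rewrite fg fN.
Qed.

Lemma vanishingD f g :
  vanishing f -> vanishing g -> vanishing (fun n => f n + g n).
Proof.
move=> vf vg e e0; have e20 : 0 < e / 2 by rewrite divr_gt0.
have [[N1 fN1] [N2 gN2]] := (vf _ e20, vg _ e20).
exists (maxn N1 N2) => n; rewrite gtn_max => /andP[n1 n2].
by rewrite [e]splitr lerD ?fN1 ?gN2.
Qed.

Lemma vanishingZ c f : 0 < c -> vanishing f -> vanishing (fun n => c * f n).
Proof.
move=> c0 vf e e0; have [N fN] := vf _ (divr_gt0 e0 c0).
by exists N => n /fN; rewrite -(ler_pM2l c0) mulrCA divff ?gt_eqF ?mulr1.
Qed.

Lemma vanishing_bound_eq0 x f :
  0 <= x -> (forall n, x <= f n) -> vanishing f -> x = 0.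
Proof.
move=> x0 xf vf; apply/le_anti; rewrite x0 andbT.
apply/ler_addgt0Pr => e /vf[N fN]; rewrite add0r.
exact: le_trans (xf N.+1) (fN _ (ltnSn N)).
Qed.

Lemma vanishing_invn : vanishing (fun n => n.+1%:R^-1).
Proof.
(* [R[i]] carries no archimedean structure: go through the real part of [e]. *)
move=> e e0; have eR : e = (complex.Re e)%:C%C by rewrite RRe_real ?gtr0_real.
have Re0 : 0 < complex.Re e by rewrite -ltcR -eR.
exists (Num.truncn (complex.Re e)^-1) => n Nn.
rewrite eR -(rmorph_nat (real_complex R)) -fmorphV lecR.
rewrite invf_ple ?posrE ?ltr0Sn //.
by rewrite ltW // (lt_le_trans (truncnS_gt _)) // ler_nat ltnW.
Qed.

Lemma sqrtC_le_sqr (x e : C) :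
  0 <= x -> 0 <= e -> (sqrtC x <= e) = (x <= e ^+ 2).
Proof.
by move=> x0 e0; rewrite -{1}(sqrCK e0) ler_sqrtC // qualifE /= exprn_ge0.
Qed.

Lemma vanishing_sqrtC f :
  (forall n, 0 <= f n) -> vanishing (fun n => sqrtC (f n)) <-> vanishing f.
Proof.
move=> f0; split=> vf e e0.
- have se0 : 0 < sqrtC e by rewrite sqrtC_gt0.
  have [N fN] := vf _ se0.
  by exists N => n /fN; rewrite ler_sqrtC ?nnegrE ?f0 ?(ltW e0).
- have [N fN] := vf _ (exprn_gt0 2 e0).
  by exists N => n /fN; rewrite sqrtC_le_sqr ?f0 ?(ltW e0).
Qed.

Lemma vanishing2_sqrtC f : (forall m n, 0 <= f m n) ->
  vanishing2 f -> vanishing2 (fun m n => sqrtC (f m n)).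
Proof.
move=> f0 vf e e0; have [N fN] := vf _ (exprn_gt0 2 e0).
by exists N => m n /fN fmN /fmN; rewrite sqrtC_le_sqr ?f0 ?(ltW e0).
Qed.

Lemma vanishing2_le_sum f g :
  (forall m n, f m n <= g m + g n) -> vanishing g -> vanishing2 f.
Proof.
move=> fg vg e e0; have [N gN] := vg _ (divr_gt0 e0 (ltr0Sn _ 1)).
exists N => m n /gN gm /gN gn.
by rewrite (le_trans (fg m n)) // [e]splitr lerD.
Qed.

End Vanishing.

Section InnerProduct.
Variables (R : realType) (G : lmodType R[i]) (ip : G -> G -> R[i]).
Hypothesis ip_inner : is_inner_product ip.

Lemma ipr_linear x : linear (ip x : G -> R[i]^o).
Proof. by case: ip_inner => ipDZr _ _ _ c y z; apply: ipDZr. Qed.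

Lemma ipDr x y z : ip x (y + z) = ip x y + ip x z.
Proof. exact: (linD (ipr_linear x) y z). Qed.

Lemma ipNr x y : ip x (- y) = - ip x y.
Proof. exact: (linN (ipr_linear x) y). Qed.

Lemma ipZr x c y : ip x (c *: y) = c * ip x y.
Proof. exact: (linZ (ipr_linear x) c y). Qed.

Lemma ipC x y : ip y x = (ip x y)^*.
Proof. by case: ip_inner. Qed.

Lemma ipDl x y z : ip (y + z) x = ip y x + ip z x.
Proof. by rewrite ipC ipDr rmorphD /= -!ipC. Qed.

Lemma ipNl x y : ip (- y) x = - ip y x.
Proof. by rewrite ipC ipNr rmorphN /= -ipC. Qed.

Lemma ipxx_ge0 x : 0 <= ip x x.
Proof. by case: ip_inner. Qed.

Lemma ipxx_eq0 x : ip x x = 0 -> x = 0.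
Proof. by case: ip_inner => _ _ _; apply. Qed.

Lemma ipxxBC x y : ip (x - y) (x - y) = ip (y - x) (y - x).
Proof. by rewrite !(ipDl, ipDr, ipNl, ipNr); ring. Qed.

Lemma ipnormBC x y : ipnorm ip (x - y) = ipnorm ip (y - x).
Proof. by rewrite /ipnorm ipxxBC. Qed.

Lemma ip_parallelogram x y :
  ip (x + y) (x + y) + ip (x - y) (x - y) = 2 * (ip x x + ip y y).
Proof. by rewrite !(ipDl, ipDr, ipNl, ipNr); ring. Qed.

Lemma ipxxD_le x y : ip (x + y) (x + y) <= 2 * (ip x x + ip y y).
Proof. by rewrite -ip_parallelogram lerDl ipxx_ge0. Qed.

Lemma ipxxB_le x y : ip (x - y) (x - y) <= 2 * (ip x x + ip y y).
Proof. by rewrite -ip_parallelogram lerDr ipxx_ge0. Qed.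

Definition ip_cvg (u : nat -> G) (h : G) :=
  vanishing (fun n => ipnorm ip (u n - h)).

Definition ip_cauchy (u : nat -> G) :=
  vanishing2 (fun m n => ipnorm ip (u m - u n)).

Lemma vanishing_ipnormE (v : nat -> G) :
  vanishing (fun n => ipnorm ip (v n)) <-> vanishing (fun n => ip (v n) (v n)).
Proof. exact: vanishing_sqrtC (fun n => ipxx_ge0 _). Qed.

Lemma ip_cvg_cauchy u h : ip_cvg u h -> ip_cauchy u.
Proof.
move=> /vanishing_ipnormE uh.
apply: vanishing2_sqrtC => [m n|]; first exact: ipxx_ge0.
apply: vanishing2_le_sum (vanishingZ (ltr0Sn _ 1) uh) => m n.
have -> : u m - u n = (u m - h) - (u n - h) by rewrite opprB addrA subrK.
by rewrite -mulrDr ipxxB_le.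
Qed.

Lemma ip_cvg_unique u h k : ip_cvg u h -> ip_cvg u k -> h = k.
Proof.
move=> /vanishing_ipnormE uh /vanishing_ipnormE uk; apply/subr0_eq/ipxx_eq0.
apply: vanishing_bound_eq0 (ipxx_ge0 _) _
  (vanishingZ (ltr0Sn _ 1) (vanishingD uk uh)) => n.
have -> : h - k = (u n - k) - (u n - h).
  by rewrite opprB [RHS]addrC addrA subrK.
exact: ipxxB_le.
Qed.

End InnerProduct.

Section FixedPoints.
Variables (R : realType) (H : lmodType R[i]) (ipH : H -> H -> R[i]).
Variable U : H -> H.
Hypothesis ipH_inner : is_inner_product ipH.

Definition fixed_space_spanned (w : H) :=
  forall k, U k = k -> k = ipH w k *: w.

Lemma fixed_point_projection_rank_one P w :
  linear U -> U w = w -> is_fixed_point_projection ipH U P ->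
  fixed_space_spanned w <-> P = (fun h => ipH w h *: w).
Proof.
move=> U_linear Uw [UP Pperp]; split=> [spanned | PE].
- apply: boolp.funext => h; rewrite {1}(spanned _ (UP h)).
  congr (_ *: _); apply/esym/eqP.
  by rewrite -subr_eq0 -ipNr // -ipDr // Pperp.
- move=> k Uk; rewrite -[RHS]/((fun h => ipH w h *: w) k) -PE.
  apply/subr0_eq/(ipxx_eq0 ipH_inner)/Pperp.
  by rewrite (linB U_linear) Uk UP.
Qed.

Section BoundedOperator.
Hypothesis U_bounded : is_bounded_linear ipH U.

Lemma bounded_sqr :
  exists2 M : R[i], 0 < M & forall h, ipH (U h) (U h) <= M * ipH h h.
Proof.
case: U_bounded => _ [M [M0 UM]]; exists (M ^+ 2 + 1) => [|h].
  by rewrite ltr_pwDr ?ltr01 ?exprn_ge0.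
have := UM h; rewrite /ipnorm -(ler_pXn2r (n := 2)) ?nnegrE;
  rewrite ?mulr_ge0 ?sqrtC_ge0 ?ipxx_ge0 //.
rewrite exprMn !sqrtCK => /le_trans; apply.
by rewrite ler_wpM2r ?ipxx_ge0 ?lerDl ?ler01.
Qed.

Lemma vanishing_Usub v : vanishing (fun n => ipH (v n) (v n)) ->
  vanishing (fun n => ipH (U (v n) - v n) (U (v n) - v n)).
Proof.
have [M M0 UM] := bounded_sqr => vv.
apply: vanishing_le
  (vanishingZ (ltr0Sn _ 1) (vanishingD (vanishingZ M0 vv) vv)) => n.
rewrite (le_trans (ipxxB_le ipH_inner _ _)) //.
by rewrite ler_pM2l ?ltr0Sn // lerD2r UM.
Qed.

Lemma fixed_of_cvg_approx_fixed u h : ip_cvg ipH u h ->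
  vanishing (fun n => ipnorm ipH (U (u n) - u n)) -> U h = h.
Proof.
move=> /(vanishing_ipnormE ipH_inner) uh /(vanishing_ipnormE ipH_inner) Uu.
apply/subr0_eq/(ipxx_eq0 ipH_inner).
have hu : vanishing (fun n => ipH (h - u n) (h - u n)).
  by apply: vanishing_le uh => n; rewrite ipxxBC.
apply: vanishing_bound_eq0 (ipxx_ge0 ipH_inner _) _
  (vanishingZ (ltr0Sn _ 1) (vanishingD (vanishing_Usub hu) Uu)) => n.
have -> : U h - h = (U (h - u n) - (h - u n)) + (U (u n) - u n).
  by rewrite (linB (proj1 U_bounded)) opprB addrAC !subrKA.
exact: ipxxD_le.
Qed.

Lemma approx_fixed_of_cvg_fixed u k : U k = k -> ip_cvg ipH u k ->
  vanishing (fun n => ipnorm ipH (U (u n) - u n)).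
Proof.
move=> Uk /(vanishing_ipnormE ipH_inner) /vanishing_Usub uk.
apply/(vanishing_ipnormE ipH_inner); apply: vanishing_le uk => n.
by rewrite (linB (proj1 U_bounded)) Uk opprB addrA subrK.
Qed.

End BoundedOperator.
End FixedPoints.

Section CyclicRepresentation.
Variables (R : realType) (A : algType R[i]) (star : A -> A)
  (phi : A -> R[i]) (tau : A -> A)
  (G : lmodType R[i]) (ip : G -> G -> R[i]) (pi : A -> G -> G) (Omega : G)
  (H : lmodType R[i]) (ipH : H -> H -> R[i]) (j : G -> H) (U : H -> H).
Hypotheses (sys : is_star_dyn_system star phi tau)
  (rep : is_cyclic_rep star phi ip pi Omega)
  (compl : is_completion ip ipH j)
  (U_bounded : is_bounded_linear ipH U)
  (U_iota : forall a, U (j (pi a Omega)) = j (pi (tau a) Omega)).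

Local Notation iota a := (j (pi a Omega)).

Let ipH_inner : is_inner_product ipH.
Proof. by case: compl. Qed.

Lemma iota_linear : linear (fun a => iota a).
Proof.
case: rep => _ [_ [piDZ _]]; case: compl => _ _ jDZ _ _ c a b.
by rewrite piDZ jDZ.
Qed.

Lemma ipH_iota a b : ipH (iota a) (iota b) = phi (star a * b).
Proof.
case: rep => _ [_ [_ [_ [_ [_ ipE]]]]]; case: compl => _ _ _ jE _.
by rewrite jE.
Qed.

Lemma iota1 : iota 1 = j Omega.
Proof. by case: rep => _ [_ [_ [pi1 _]]]; rewrite pi1. Qed.

Lemma ipH_vacuum : ipH (j Omega) (j Omega) = 1.
Proof.
case: sys => star_alg [_ _ phi1] _ _ _.
by rewrite -iota1 ipH_iota (star_algebra1 star_alg) mul1r.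
Qed.

Lemma U_vacuum : U (j Omega) = j Omega.
Proof. by case: sys => _ _ _ tau1 _; rewrite -iota1 U_iota tau1. Qed.

Lemma phinorm_iota a : phinorm star phi a = ipnorm ipH (iota a).
Proof. by rewrite /phinorm /ipnorm ipH_iota. Qed.

Lemma phinormB a b : phinorm star phi (a - b) = ipnorm ipH (iota a - iota b).
Proof. by rewrite phinorm_iota (linB iota_linear). Qed.

Lemma phinorm_tau_sub a :
  phinorm star phi (tau a - a) = ipnorm ipH (U (iota a) - iota a).
Proof. by rewrite phinormB U_iota. Qed.

Lemma phinorm_subC a c :
  phinorm star phi (a - c%:A) = ipnorm ipH (iota a - c *: j Omega).
Proof. by rewrite phinormB (linZ iota_linear) iota1. Qed.

Lemma iota_dense k : exists a : nat -> A, ip_cvg ipH (fun n => iota (a n)) k.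
Proof.
have approx n : exists a : A, ipnorm ipH (k - iota a) <= n.+1%:R^-1.
  have n0 : 0 < n.+1%:R^-1 :> R[i] by rewrite invr_gt0 ltr0Sn.
  case: compl => _ _ _ _ dense; have [x kx] := dense k _ n0.
  case: rep => _ [_ [_ [_ [_ [cyclic _]]]]]; have [a xa] := cyclic x.
  by exists a; rewrite -xa.
exists (fun n => xchoose (approx n)).
apply: vanishing_le (@vanishing_invn R) => n.
by rewrite ipnormBC //; exact: (xchooseP (approx n)).
Qed.

Lemma ergodic_fixed_space_spanned :
  ergodic star phi tau -> fixed_space_spanned ipH U (j Omega).
Proof.
move=> erg k Uk; have [a ak] := iota_dense k.
have tau_a : vanishing (fun n => phinorm star phi (tau (a n) - a n)).
  apply/(eq_vanishing (fun n => phinorm_tau_sub (a n))).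
  exact: (approx_fixed_of_cvg_fixed ipH_inner U_bounded Uk ak).
have cauchy_a : vanishing2 (fun m n => phinorm star phi (a m - a n)).
  apply/(eq_vanishing2 (fun m n => phinormB (a m) (a n))).
  exact: (ip_cvg_cauchy ipH_inner ak).
have [alpha a_alpha] := erg a tau_a cauchy_a.
have k_alpha : k = alpha *: j Omega.
  apply: (ip_cvg_unique ipH_inner ak).
  exact: (eq_vanishing (fun n => phinorm_subC (a n) alpha)).1 a_alpha.
by rewrite {2}k_alpha ipZr // ipH_vacuum mulr1.
Qed.

Lemma fixed_space_spanned_ergodic :
  fixed_space_spanned ipH U (j Omega) -> ergodic star phi tau.
Proof.
move=> spanned u tau_u cauchy_u.
have [h uh] : exists h, ip_cvg ipH (fun n => iota (u n)) h.
  case: compl => _ complete _ _ _; apply: complete.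
  exact: (eq_vanishing2 (fun m n => phinormB (u m) (u n))).1 cauchy_u.
have Uh : U h = h.
  apply: (fixed_of_cvg_approx_fixed ipH_inner U_bounded uh).
  exact: (eq_vanishing (fun n => phinorm_tau_sub (u n))).1 tau_u.
exists (ipH (j Omega) h).
apply: (eq_vanishing (fun n => phinorm_subC (u n) _)).2.
by rewrite -spanned.
Qed.

End CyclicRepresentation.

Unset Implicit Arguments.

Theorem proposition2p4 (R : realType) (A : algType R[i]) (star : A -> A)
    (phi : A -> R[i]) (tau : A -> A)
    (G : lmodType R[i]) (ip : G -> G -> R[i]) (pi : A -> G -> G) (Omega : G)
    (H : lmodType R[i]) (ipH : H -> H -> R[i]) (j : G -> H)
    (U : H -> H) (P : H -> H) :
  is_star_dyn_system star phi tau ->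
  is_cyclic_rep star phi ip pi Omega ->
  is_completion ip ipH j ->
  is_bounded_linear ipH U ->
  (forall a : A, U (j (pi a Omega)) = j (pi (tau a) Omega)) ->
  is_fixed_point_projection ipH U P ->
  (ergodic star phi tau <-> P = (fun h : H => ipH (j Omega) h *: j Omega)).
Proof.
move=> sys rep compl U_bounded U_iota P_proj.
have ipH_inner : is_inner_product ipH by case: compl.
rewrite -(fixed_point_projection_rank_one ipH_inner (proj1 U_bounded)
  (U_vacuum sys rep U_iota) P_proj).
split; first exact: ergodic_fixed_space_spanned sys rep compl U_bounded U_iota.
exact: (fixed_space_spanned_ergodic rep compl U_bounded U_iota).
Qed.
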